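(* For prefixes $p,p',p''$, whenever both sides are defined (via the concatenation relation, which is a partial function), $p \cdot (p' \cdot p'') = (p \cdot p') \cdot p''$.
   Context: Prefixes are generated by $p ::= \mathtt{oneEmp} \mid \mathtt{oneFull} \mid \mathtt{epsEmp} \mid \mathtt{par}(p,p') \mid \mathtt{catA}(p) \mid \mathtt{catB}(p,p') \mid \mathtt{sumEmp} \mid \mathtt{inl}(p) \mid \mathtt{inr}(p) \mid \mathtt{starEmp} \mid \mathtt{starDone} \mid \mathtt{stA}(p) \mid \mathtt{stB}(p,p')$. The prefixes of type $1$ are exactly $\mathtt{oneEmp}$ and $\mathtt{oneFull}$. Prefix concatenation $p\cdot p'\sim p''$ (inductive): $\mathtt{epsEmp}\cdot\mathtt{epsEmp}\sim\mathtt{epsEmp}$; $\mathtt{oneEmp}\cdot p\sim p$ whenever $p$ is a prefix of type $1$; $\mathtt{oneFull}\cdot\mathtt{epsEmp}\sim\mathtt{oneFull}$; $\mathtt{par}(p_1,p_2)\cdot\mathtt{par}(p_1',p_2')\sim\mathtt{par}(p_1'',p_2'')$ if $p_i\cdot p_i'\sim p_i''$ for $i=1,2$; $\mathtt{catA}(p)\cdot\mathtt{catA}(p')\sim\mathtt{catA}(p'')$ if $p\cdot p'\sim p''$; $\mathtt{catA}(p)\cdot\mathtt{catB}(p',q)\sim\mathtt{catB}(p'',q)$ if $p\cdot p'\sim p''$; $\mathtt{catB}(p,p')\cdot p''\sim\mathtt{catB}(p,p''')$ if $p'\cdot p''\sim p'''$; $\mathtt{sumEmp}\cdot p\sim p$;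 $\mathtt{inl}(p)\cdot p'\sim\mathtt{inl}(p'')$ if $p\cdot p'\sim p''$; $\mathtt{inr}(p)\cdot p'\sim\mathtt{inr}(p'')$ if $p\cdot p'\sim p''$; $\mathtt{starEmp}\cdot p\sim p$; $\mathtt{starDone}\cdot\mathtt{epsEmp}\sim\mathtt{starDone}$; $\mathtt{stA}(p)\cdot\mathtt{catA}(p')\sim\mathtt{stA}(p'')$ if $p\cdot p'\sim p''$; $\mathtt{stA}(p)\cdot\mathtt{catB}(p',q)\sim\mathtt{stB}(p'',q)$ if $p\cdot p'\sim p''$; $\mathtt{stB}(p,p')\cdot p''\sim\mathtt{stB}(p,p''')$ if $p'\cdot p''\sim p'''$. We write $p\cdot p'$ for the unique $p''$ with $p\cdot p'\sim p''$ when it exists. *)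

Inductive prefix : Type :=
| oneEmp : prefix
| oneFull : prefix
| epsEmp : prefix
| par : prefix -> prefix -> prefix
| catA : prefix -> prefix
| catB : prefix -> prefix -> prefix
| sumEmp : prefix
| inl : prefix -> prefix
| inr : prefix -> prefix
| starEmp : prefix
| starDone : prefix
| stA : prefix -> prefix
| stB : prefix -> prefix -> prefix.

Inductive prefix_of_one : prefix -> Prop :=
| one_emp : prefix_of_one oneEmp
| one_full : prefix_of_one oneFull.

(* concat p p' p''  means  p . p' ~ p'' *)
Inductive concat : prefix -> prefix -> prefix -> Prop :=
| c_eps : concat epsEmp epsEmp epsEmp
| c_oneEmp : forall p, prefix_of_one p -> concat oneEmp p p
| c_oneFull : concat oneFull epsEmp oneFull
| c_par : forall p1 p2 p1' p2' p1'' p2'',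
    concat p1 p1' p1'' -> concat p2 p2' p2'' ->
    concat (par p1 p2) (par p1' p2') (par p1'' p2'')
| c_catAA : forall p p' p'', concat p p' p'' -> concat (catA p) (catA p') (catA p'')
| c_catAB : forall p p' p'' q, concat p p' p'' -> concat (catA p) (catB p' q) (catB p'' q)
| c_catB : forall p p' p'' p''', concat p' p'' p''' -> concat (catB p p') p'' (catB p p''')
| c_sumEmp : forall p, concat sumEmp p p
| c_inl : forall p p' p'', concat p p' p'' -> concat (inl p) p' (inl p'')
| c_inr : forall p p' p'', concat p p' p'' -> concat (inr p) p' (inr p'')
| c_starEmp : forall p, concat starEmp p p
| c_starDone : concat starDone epsEmp starDone
| c_stAA : forall p p' p'', concat p p' p'' -> concat (stA p) (catA p') (stA p'')
| c_stAB : forall p p' p'' q, concat p p' p'' -> concat (stA p) (catB p' q) (stB p'' q)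
| c_stB : forall p p' p'' p''', concat p' p'' p''' -> concat (stB p p') p'' (stB p p''').

(** Concatenation is a partial function, so it suffices
    to show that whenever [(p . p') . p''] is defined, so is [p . (p' . p'')],
    with the same value. This goes by induction on the derivation of
    [p . p'], inverting the derivation of the outer concatenation: every rule
    consumes its left argument structurally, so the inner derivation
    determines the shape of the outer one. The only non-structural case is
    [oneEmp . p ~ p], where [p] must stay of type [1], which the result of a
    concatenation starting from a prefix of type [1] is. *)


Lemma concat_functional p p' r r' :
  concat p p' r -> concat p p' r' -> r = r'.
Proof.
  intros Hr; revert r'.
  induction Hr; intros r' Hr'; inversion Hr'; subst; try reflexivity;
    repeat match goal with
    | IH : forall r', concat ?a ?b r' -> _ = r', H : concat ?a ?b _ |- _ =>
        apply IH in H; subst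
    end; reflexivity.
Qed.

Lemma concat_prefix_of_one p p' r :
  prefix_of_one p -> concat p p' r -> prefix_of_one r.
Proof.
  intros [|] Hr; inversion Hr; subst; auto using prefix_of_one.
Qed.

Lemma concat_assoc_exists p p' s :
  concat p p' s -> forall p'' t, concat s p'' t ->
  exists q, concat p' p'' q /\ concat p q t.
Proof.
  induction 1 as [| p Hp | | | | | | | | | | | | |]; intros u t Hst.
  2: { exists t; split; [exact Hst |].
       constructor; exact (concat_prefix_of_one _ _ _ Hp Hst). }
  all: try solve [eauto using concat].
  all: inversion Hst; subst;
    repeat match goal with
    | IH : forall p'' t, concat ?s p'' t -> _, H : concat ?s _ _ |- _ =>
        destruct (IH _ _ H) as (? & ? & ?); clear H
    end; eauto using concat.
Qed.

Theorem mainTheorem9 : forall (p p' p'' q r s t : prefix),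
  concat p' p'' q -> concat p q r ->
  concat p p' s -> concat s p'' t ->
  r = t.
Proof.
  intros p p' p'' q r s t Hq Hr Hs Ht.
  destruct (concat_assoc_exists _ _ _ Hs _ _ Ht) as (q' & Hq' & Ht').
  rewrite (concat_functional _ _ _ _ Hq Hq') in Hr.
  exact (concat_functional _ _ _ _ Hr Ht').
Qed.
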